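(* Suppose Assumptions 1–4 hold and $p$ is convex. Let $\mathbf{x}$ be a Cournot candidate which is not socially optimal, and let $\alpha_n=C_n'(x_n)$ for each $n$. Consider the modified model in which each cost function $C_n$ is replaced by $\overline C_n(x)=\alpha_n x$ for $x\ge0$ (same $p$, same $N$). Then for the modified model Assumptions 1–4 still hold, $\mathbf{x}$ is a Cournot candidate, and its efficiency $\overline\gamma(\mathbf{x})$ in the modified model satisfies $0<\overline\gamma(\mathbf{x})\le\gamma(\mathbf{x})$, where $\gamma(\mathbf{x})$ is its efficiency in the original model.
   Context: Cournot model: $N$ suppliers, inverse demand $p:[0,\infty)\to[0,\infty)$, supplier $n$ has cost $C_n:[0,\infty)\to[0,\infty)$ and chooses $x_n\ge0$; $X=\sum_n x_n$. $\partial_\pm$ denote right/left derivatives; $C_n'(0)$ is the right derivative at $0$. Assumption 1: each $C_n$ is convex, continuous, nondecreasing on $[0,\infty)$, continuously differentiable on $(0,\infty)$, with $C_n(0)=0$. Assumption 2: $p$ is continuous, nonnegative, nonincreasing, $p(0)>0$; its right derivative at $0$ exists and at every $q>0$ its left and right derivatives exist. Assumption 3: there exists $R>0$ such that $p(R)\le\min_n C_n'(0)$. Assumption 4: $p(0)>\min_n C_n'(0)$. Social welfare of $\mathbf{x}\ge0$: $W(\mathbf{x})=\int_0^X p(q)\,dq-\sum_{n=1}^N C_n(x_n)$; a social optimum $\mathbf{x}^S$ maximizes $W$ over nonnegative vectors (one exists under these assumptions). Efficiency of $\mathbf{x}\ge0$: $\gamma(\mathbf{x})=W(\mathbf{x})/W(\mathbf{x}^S)$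 (the denominator is positive and independent of the choice of social optimum). A nonnegative vector $\mathbf{x}$ is a Cournot candidate if for every $n$: $C_n'(x_n)\le p(X)+x_n\,\partial_-p(X)$ whenever $x_n>0$, and $C_n'(x_n)\ge p(X)+x_n\,\partial_+p(X)$. *)

From Stdlib Require Import Reals Lra Classical ClassicalEpsilon.
Open Scope R_scope.

Fixpoint sumN (N : nat) (f : nat -> R) : R :=
  match N with O => 0 | S k => sumN k f + f k end.

(* Riemann integral of f over [a,b] (well defined since RiemannInt is
   independent of the integrability proof; arbitrary if not integrable). *)
Definition Rint (f : R -> R) (a b : R) : R :=
  epsilon (inhabits 0)
    (fun v => exists pr : Riemann_integrable f a b, RiemannInt pr = v).

Definition right_deriv (f : R -> R) (x l : R) : Prop :=
  forall eps, 0 < eps -> exists delta, 0 < delta /\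
    forall h, 0 < h < delta -> Rabs ((f (x + h) - f x) / h - l) < eps.

Definition left_deriv (f : R -> R) (x l : R) : Prop :=
  forall eps, 0 < eps -> exists delta, 0 < delta /\
    forall h, 0 < h < delta -> Rabs ((f x - f (x - h)) / h - l) < eps.

Definition convex_nonneg (f : R -> R) : Prop :=
  forall x y t, 0 <= x -> 0 <= y -> 0 <= t <= 1 ->
    f (t * x + (1 - t) * y) <= t * f x + (1 - t) * f y.

Definition continuous_nonneg (f : R -> R) : Prop :=
  forall x, 0 <= x -> forall eps, 0 < eps -> exists delta, 0 < delta /\
    forall y, 0 <= y -> Rabs (y - x) < delta -> Rabs (f y - f x) < eps.

Definition nondecreasing_nonneg (f : R -> R) : Prop :=
  forall x y, 0 <= x -> x <= y -> f x <= f y.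

Definition nonincreasing_nonneg (f : R -> R) : Prop :=
  forall x y, 0 <= x -> x <= y -> f y <= f x.

(* dC n is the derivative C_n' of C n: right derivative at 0,
   derivative at every x > 0 *)
Definition Assumption1 (N : nat) (C : nat -> R -> R) (dC : nat -> R -> R)
  : Prop :=
  forall n, (n < N)%nat ->
    convex_nonneg (C n) /\ continuous_nonneg (C n) /\
    nondecreasing_nonneg (C n) /\ C n 0 = 0 /\
    (forall x, 0 <= x -> 0 <= C n x) /\
    right_deriv (C n) 0 (dC n 0) /\
    (forall x, 0 < x -> derivable_pt_lim (C n) x (dC n x)) /\
    (forall x, 0 < x -> continuity_pt (dC n) x).

(* dpp q = right derivative of p at q (q >= 0),
   dpm q = left derivative of p at q (q > 0) *)
Definition Assumption2 (p dpp dpm : R -> R) : Prop :=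
  continuous_nonneg p /\ (forall q, 0 <= q -> 0 <= p q) /\
  nonincreasing_nonneg p /\ 0 < p 0 /\
  (forall q, 0 <= q -> right_deriv p q (dpp q)) /\
  (forall q, 0 < q -> left_deriv p q (dpm q)).

Definition Assumption3 (N : nat) (p : R -> R) (dC : nat -> R -> R) : Prop :=
  exists Rb, 0 < Rb /\ forall n, (n < N)%nat -> p Rb <= dC n 0.

Definition Assumption4 (N : nat) (p : R -> R) (dC : nat -> R -> R) : Prop :=
  exists n, (n < N)%nat /\ dC n 0 < p 0.

Definition nonneg_vec (N : nat) (x : nat -> R) : Prop :=
  forall n, (n < N)%nat -> 0 <= x n.

Definition total (N : nat) (x : nat -> R) : R := sumN N x.

Definition welfare (N : nat) (p : R -> R) (C : nat -> R -> R) (x : nat -> R)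
  : R := Rint p 0 (total N x) - sumN N (fun n => C n (x n)).

Definition social_opt (N : nat) (p : R -> R) (C : nat -> R -> R)
  (x : nat -> R) : Prop :=
  nonneg_vec N x /\
  forall y, nonneg_vec N y -> welfare N p C y <= welfare N p C x.

Definition cournot_candidate (N : nat) (p dpp dpm : R -> R)
  (dC : nat -> R -> R) (x : nat -> R) : Prop :=
  nonneg_vec N x /\
  forall n, (n < N)%nat ->
    (0 < x n -> dC n (x n) <= p (total N x) + x n * dpm (total N x)) /\
    p (total N x) + x n * dpp (total N x) <= dC n (x n).

From Stdlib Require Import Reals Lra Lia Classical ClassicalEpsilon.
Open Scope R_scope.

(* Write X = sum_n x_n, P = p(X), W for welfare and Wl for welfare with the
   linear costs.
   1. Convexity of C_n gives the supporting line
      C_n(y) >= C_n(x_n) + alpha_n (y - x_n) on [0,oo); hence C_n'(0) <= alpha_n,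
      and with the gap d = sum_n (alpha_n x_n - C_n(x_n)) >= 0 we get W = Wl + d
      at x and W <= Wl + d everywhere.
   2. As p is nonincreasing its left derivative is <= 0, so the Cournot
      conditions give alpha_n <= P if x_n > 0 and P <= alpha_n if x_n = 0;
      hence sum_n alpha_n x_n <= P X <= int_0^X p, i.e. Wl(x) >= 0.
   3. If Wl(x) = 0 both inequalities are equalities: every alpha_n >= P and p is
      constant on [0,X], so every alpha_n >= p(0).  Then Wl <= 0 everywhere, x is
      optimal for the linear costs and, by 1, for the original ones.  So Wl(x) > 0,
      which also yields Assumption 4 for the linear model.
   4. The efficiency bound is the inequality a/b <= (a+d)/c for 0 < a <= b,
      d >= 0 and a + d <= c <= b + d. *)

Lemma sumN_ext N f g :
  (forall n, (n < N)%nat -> f n = g n) -> sumN N f = sumN N g.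
Proof. induction N; simpl; intros H; auto. rewrite IHN, H; auto. Qed.

Lemma sumN_le N f g :
  (forall n, (n < N)%nat -> f n <= g n) -> sumN N f <= sumN N g.
Proof.
  induction N; simpl; intros H; [lra|].
  assert (sumN N f <= sumN N g) by auto. assert (f N <= g N) by auto. lra.
Qed.

Lemma sumN_minus N f g : sumN N (fun n => f n - g n) = sumN N f - sumN N g.
Proof. induction N; simpl; [lra|]. rewrite IHN; ring. Qed.

Lemma sumN_scal N c f : sumN N (fun n => c * f n) = c * sumN N f.
Proof. induction N; simpl; [lra|]. rewrite IHN; ring. Qed.

Lemma sumN_nonneg N f :
  (forall n, (n < N)%nat -> 0 <= f n) -> 0 <= sumN N f.
Proof.
  induction N; simpl; intros H; [lra|].
  assert (0 <= sumN N f) by auto. assert (0 <= f N) by auto. lra.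
Qed.

Lemma sumN_ge_term N f :
  (forall n, (n < N)%nat -> 0 <= f n) ->
  forall n, (n < N)%nat -> f n <= sumN N f.
Proof.
  induction N; simpl; intros H n Hn; [lia|].
  assert (0 <= sumN N f) by (apply sumN_nonneg; auto).
  destruct (Nat.eq_dec n N) as [->|Hne]; [lra|].
  assert (f n <= sumN N f) by (apply IHN; auto; lia).
  assert (0 <= f N) by auto. lra.
Qed.

Lemma sumN_nonneg_zero N f :
  (forall n, (n < N)%nat -> 0 <= f n) -> sumN N f <= 0 ->
  forall n, (n < N)%nat -> f n = 0.
Proof.
  intros H Hs n Hn. assert (f n <= sumN N f) by (apply sumN_ge_term; auto).
  assert (0 <= f n) by auto. lra.
Qed.

Lemma limit_le_bound (g : R -> R) l s d0 :
  0 < d0 -> (forall h, 0 < h < d0 -> g h <= s) ->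
  (forall eps, 0 < eps -> exists delta, 0 < delta /\
     forall h, 0 < h < delta -> Rabs (g h - l) < eps) ->
  l <= s.
Proof.
  intros Hd0 Hg Hl. destruct (Rle_or_lt l s) as [|Hls]; auto.
  destruct (Hl (l - s)) as [d [Hd Hh]]; [lra|].
  assert (Hmin : 0 < Rmin d0 d) by (apply Rmin_pos; auto).
  pose proof (Rmin_l d0 d). pose proof (Rmin_r d0 d).
  set (h := Rmin d0 d / 2).
  specialize (Hh h ltac:(unfold h; lra)). specialize (Hg h ltac:(unfold h; lra)).
  apply Rabs_def2 in Hh. lra.
Qed.

Lemma limit_ge_bound (g : R -> R) l s d0 :
  0 < d0 -> (forall h, 0 < h < d0 -> s <= g h) ->
  (forall eps, 0 < eps -> exists delta, 0 < delta /\
     forall h, 0 < h < delta -> Rabs (g h - l) < eps) ->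
  s <= l.
Proof.
  intros Hd0 Hg Hl. apply Ropp_le_cancel.
  apply (limit_le_bound (fun h => - g h) (- l) (- s) d0 Hd0).
  - intros h Hh. apply Ropp_le_contravar; auto.
  - intros eps He. destruct (Hl eps He) as [d [Hd Hh]].
    exists d; split; auto. intros h Hdh.
    replace (- g h - - l) with (- (g h - l)) by ring. rewrite Rabs_Ropp; auto.
Qed.

Lemma ratio_in_unit h L : 0 < h < L -> 0 <= h / L <= 1.
Proof.
  intros Hh. split; [apply Rlt_le, Rdiv_lt_0_compat; lra|].
  apply Rmult_le_reg_r with L; [lra|].
  replace (h / L * L) with h by (field; lra). lra.
Qed.

Lemma convex_support_right f a l y :
  convex_nonneg f -> 0 <= a -> right_deriv f a l -> a <= y ->
  f a + l * (y - a) <= f y.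
Proof.
  intros Hc Ha Hr Hy. destruct (Req_dec a y) as [<-|Hne]; [lra|].
  set (s := (f y - f a) / (y - a)).
  assert (Hs : s * (y - a) = f y - f a) by (unfold s; field; lra).
  (* the difference quotients on (a, y) are bounded by the chord slope s *)
  assert (Hls : l <= s).
  { apply (limit_le_bound (fun h => (f (a + h) - f a) / h) l s (y - a));
      [lra| |exact Hr].
    intros h Hh. set (t := 1 - h / (y - a)).
    assert (Ht : 0 <= t <= 1) by (pose proof (ratio_in_unit h (y - a) Hh); unfold t; lra).
    pose proof (Hc a y t Ha ltac:(lra) Ht) as Hconv.
    replace (t * a + (1 - t) * y) with (a + h) in Hconv by (unfold t; field; lra).
    assert (Hsh : s * h = (1 - t) * (f y - f a)) by (unfold s, t; field; lra).
    apply Rmult_le_reg_r with h; [lra|].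
    replace ((f (a + h) - f a) / h * h) with (f (a + h) - f a) by (field; lra).
    lra. }
  assert (l * (y - a) <= s * (y - a)) by (apply Rmult_le_compat_r; lra). lra.
Qed.

Lemma convex_support_left f a l y :
  convex_nonneg f -> 0 <= y -> y < a -> left_deriv f a l ->
  f a + l * (y - a) <= f y.
Proof.
  intros Hc Hy Hya Hl.
  set (s := (f a - f y) / (a - y)).
  assert (Hs : s * (a - y) = f a - f y) by (unfold s; field; lra).
  assert (Hsl : s <= l).
  { apply (limit_ge_bound (fun h => (f a - f (a - h)) / h) l s (a - y));
      [lra| |exact Hl].
    intros h Hh. set (t := h / (a - y)).
    assert (Ht : 0 <= t <= 1) by (apply ratio_in_unit; lra).
    pose proof (Hc y a t Hy ltac:(lra) Ht) as Hconv.
    replace (t * y + (1 - t) * a) with (a - h) in Hconv by (unfold t; field; lra).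
    assert (Hsh : s * h = t * (f a - f y)) by (unfold s, t; field; lra).
    apply Rmult_le_reg_r with h; [lra|].
    replace ((f a - f (a - h)) / h * h) with (f a - f (a - h)) by (field; lra).
    lra. }
  assert (s * (a - y) <= l * (a - y)) by (apply Rmult_le_compat_r; lra). lra.
Qed.

Lemma derivable_right_deriv f z l : derivable_pt_lim f z l -> right_deriv f z l.
Proof.
  intros H eps He. destruct (H eps He) as [d Hd].
  exists d; split; [apply cond_pos|]. intros h Hh.
  apply Hd; [lra|]. rewrite Rabs_pos_eq; lra.
Qed.

Lemma derivable_left_deriv f z l : derivable_pt_lim f z l -> left_deriv f z l.
Proof.
  intros H eps He. destruct (H eps He) as [d Hd].
  exists d; split; [apply cond_pos|]. intros h Hh.
  specialize (Hd (- h) ltac:(lra)).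
  rewrite Rabs_Ropp, Rabs_pos_eq in Hd by lra. specialize (Hd ltac:(lra)).
  replace ((f z - f (z - h)) / h) with ((f (z + - h) - f z) / - h); auto.
  replace (z + - h) with (z - h) by ring. field; lra.
Qed.

Lemma nonincreasing_left_deriv_nonpos p q l :
  nonincreasing_nonneg p -> 0 < q -> left_deriv p q l -> l <= 0.
Proof.
  intros Hp Hq Hl.
  apply (limit_le_bound (fun h => (p q - p (q - h)) / h) l 0 q Hq); auto.
  intros h Hh. apply Rmult_le_reg_r with h; [lra|].
  replace ((p q - p (q - h)) / h * h) with (p q - p (q - h)) by (field; lra).
  assert (p q <= p (q - h)) by (apply Hp; lra). lra.
Qed.

(* A convex cost with derivative dc has, at every a >= 0, the supporting line
   of slope dc a on [0,oo) (this is where C_n'(x_n) acts as a subgradient). *)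
Lemma convex_cost_support (c dc : R -> R) a y :
  convex_nonneg c -> right_deriv c 0 (dc 0) ->
  (forall z, 0 < z -> derivable_pt_lim c z (dc z)) ->
  0 <= a -> 0 <= y -> c a + dc a * (y - a) <= c y.
Proof.
  intros Hc Hr Hd Ha Hy. destruct (Rle_or_lt a y) as [Hay|Hya].
  - destruct (Req_dec a 0) as [->|Ha0]; [apply convex_support_right; auto|].
    apply convex_support_right; auto. apply derivable_right_deriv, Hd; lra.
  - apply convex_support_left; auto. apply derivable_left_deriv, Hd; lra.
Qed.

Lemma convex_cost_slope_at_zero_le (c dc : R -> R) a :
  convex_nonneg c -> right_deriv c 0 (dc 0) ->
  (forall z, 0 < z -> derivable_pt_lim c z (dc z)) ->
  0 <= a -> dc 0 <= dc a.
Proof.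
  intros Hc Hr Hd Ha. destruct (Req_dec a 0) as [->|Ha0]; [lra|].
  pose proof (convex_cost_support c dc 0 a Hc Hr Hd (Rle_refl 0) Ha).
  pose proof (convex_cost_support c dc a 0 Hc Hr Hd Ha (Rle_refl 0)).
  apply Rmult_le_reg_r with a; lra.
Qed.

Lemma continuous_nonneg_of_continuity f :
  (forall z, continuity_pt f z) -> continuous_nonneg f.
Proof.
  intros Hf z _ eps He. destruct (Hf z eps He) as [d [Hd Hy]].
  exists d; split; auto. intros y _ Hyd.
  destruct (Req_dec z y) as [<-|Hzy].
  - rewrite Rminus_diag, Rabs_R0; auto.
  - apply (Hy y). split; [split; [exact I|exact Hzy]|exact Hyd].
Qed.

Definition linear_costs (a : nat -> R) : nat -> R -> R := fun n z => a n * z.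

Lemma linear_costs_assumption1 N (a : nat -> R) :
  (forall n, (n < N)%nat -> 0 <= a n) ->
  Assumption1 N (linear_costs a) (fun n _ => a n).
Proof.
  intros Ha n Hn. unfold linear_costs. pose proof (Ha n Hn) as Han.
  assert (Hd : forall z, derivable_pt_lim (fun y => a n * y) z (a n)).
  { intros z eps He. exists (mkposreal 1 Rlt_0_1). intros h Hh _.
    replace ((a n * (z + h) - a n * z) / h - a n) with 0 by (field; lra).
    rewrite Rabs_R0; auto. }
  repeat split.
  - intros u v t _ _ _. right; ring.
  - apply continuous_nonneg_of_continuity. intros z.
    apply derivable_continuous_pt. exists (a n). apply Hd.
  - intros u v _ Huv. apply Rmult_le_compat_l; auto.
  - ring.
  - intros u Hu. apply Rmult_le_pos; auto.
  - apply derivable_right_deriv, Hd.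
  - intros z _. apply Hd.
  - intros z _. apply continuity_pt_const. intros u v; reflexivity.
Qed.

Lemma continuous_nonneg_integrable f a b :
  continuous_nonneg f -> 0 <= a <= b -> Riemann_integrable f a b.
Proof.
  intros Hf Hab.
  (* f (max 0 y) is continuous on the whole line and agrees with f on [a,b] *)
  refine (@Riemann_integrable_ext (fun y => f (Rmax 0 y)) f a b _ _).
  - intros y Hy. rewrite Rmin_left, Rmax_right in Hy by lra.
    f_equal. apply Rmax_right. lra.
  - apply continuity_implies_RiemannInt; [lra|]. intros z _ eps He.
    destruct (Hf _ (Rmax_l 0 z) eps He) as [d [Hd Hy]].
    exists d; split; auto. intros y [_ Hyd]. simpl in *. unfold R_dist in *.
    apply Hy; [apply Rmax_l|]. eapply Rle_lt_trans; [|exact Hyd].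
    unfold Rmax; destruct (Rle_dec 0 y), (Rle_dec 0 z); unfold Rabs;
      repeat destruct Rcase_abs; lra.
Qed.

Lemma Rint_RiemannInt f a b (pr : Riemann_integrable f a b) :
  Rint f a b = RiemannInt pr.
Proof.
  unfold Rint.
  destruct (epsilon_spec (inhabits 0)
    (fun v => exists pr : Riemann_integrable f a b, RiemannInt pr = v))
    as [pr' <-]; [exists (RiemannInt pr), pr; auto|].
  apply RiemannInt_P5.
Qed.

Lemma Rint_bound f a b l u :
  continuous_nonneg f -> 0 <= a <= b -> (forall y, a < y < b -> l <= f y <= u) ->
  l * (b - a) <= Rint f a b <= u * (b - a).
Proof.
  intros Hf Hab H. rewrite (Rint_RiemannInt _ _ _ (continuous_nonneg_integrable f a b Hf Hab)).
  apply RiemannInt_const_bound; auto; lra.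
Qed.

Lemma Rint_chasles f a b c :
  continuous_nonneg f -> 0 <= a <= b -> b <= c -> Rint f a b + Rint f b c = Rint f a c.
Proof.
  intros Hf Hab Hbc.
  rewrite (Rint_RiemannInt _ _ _ (continuous_nonneg_integrable f a b Hf Hab)),
    (Rint_RiemannInt _ _ _ (continuous_nonneg_integrable f b c Hf ltac:(lra))),
    (Rint_RiemannInt _ _ _ (continuous_nonneg_integrable f a c Hf ltac:(lra))).
  apply RiemannInt_P26.
Qed.

Section Demand.
Variable p : R -> R.
Hypothesis p_cont : continuous_nonneg p.
Hypothesis p_noninc : nonincreasing_nonneg p.

Lemma Rint_demand_bounds X :
  0 <= X -> p X * X <= Rint p 0 X <= p 0 * X.
Proof.
  intros HX.
  pose proof (Rint_bound p 0 X (p X) (p 0) p_cont ltac:(lra)) as Hb.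
  rewrite Rminus_0_r in Hb. apply Hb. intros y Hy. split; apply p_noninc; lra.
Qed.

Lemma Rint_demand_flat X :
  0 < X -> Rint p 0 X <= p X * X -> p 0 = p X.
Proof.
  intros HX Hint. assert (HpX : p X <= p 0) by (apply p_noninc; lra).
  destruct (Rle_lt_or_eq_dec _ _ HpX) as [Hlt|Heq]; [exfalso|auto].
  (* by continuity at 0, p exceeds p X on some [0, e] with 0 < e < X *)
  destruct (p_cont 0 (Rle_refl 0) ((p 0 - p X) / 2) ltac:(lra)) as [d [Hd Hcd]].
  pose proof (Rmin_l (d / 2) (X / 2)). pose proof (Rmin_r (d / 2) (X / 2)).
  assert (0 < Rmin (d / 2) (X / 2)) by (apply Rmin_pos; lra).
  set (e := Rmin (d / 2) (X / 2)) in *.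
  assert (Hpe : p X < p e).
  { assert (Hed : Rabs (e - 0) < d) by (rewrite Rminus_0_r, Rabs_pos_eq; lra).
    specialize (Hcd e ltac:(lra) Hed). apply Rabs_def2 in Hcd. lra. }
  pose proof (Rint_chasles p 0 e X p_cont ltac:(lra) ltac:(lra)) as Hsplit.
  pose proof (proj1 (Rint_demand_bounds e ltac:(lra))) as Hfirst.
  pose proof (proj1 (Rint_bound p e X (p X) (p 0) p_cont ltac:(lra)
    ltac:(intros; split; apply p_noninc; lra))) as Hsecond.
  assert (0 < (p e - p X) * e) by (apply Rmult_lt_0_compat; lra).
  lra.
Qed.

Lemma linear_welfare_nonpos N (a y : nat -> R) :
  (forall n, (n < N)%nat -> p 0 <= a n) -> nonneg_vec N y ->
  welfare N p (linear_costs a) y <= 0.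
Proof.
  intros Ha Hy. unfold welfare, linear_costs.
  assert (HY : 0 <= total N y) by (apply sumN_nonneg; auto).
  pose proof (proj2 (Rint_demand_bounds _ HY)).
  assert (p 0 * total N y <= sumN N (fun n => a n * y n)).
  { unfold total. rewrite <- sumN_scal. apply sumN_le. intros n Hn.
    apply Rmult_le_compat_r; auto. }
  lra.
Qed.

Lemma linear_costs_assumption4 N (a x : nat -> R) :
  nonneg_vec N x -> 0 < welfare N p (linear_costs a) x ->
  Assumption4 N p (fun n _ => a n).
Proof.
  intros Hx Hw. apply NNPP. intros Hno.
  assert (Ha : forall n, (n < N)%nat -> p 0 <= a n).
  { intros n Hn. apply Rnot_lt_le. intros Hlt. apply Hno. exists n; auto. }
  pose proof (linear_welfare_nonpos N a x Ha Hx). lra.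
Qed.

End Demand.

Definition cost_gap N (C : nat -> R -> R) (a x : nat -> R) : R :=
  sumN N (fun n => a n * x n - C n (x n)).

Section Linearisation.
Variables (N : nat) (p : R -> R) (C : nat -> R -> R) (a x : nat -> R).
Hypothesis support : forall n, (n < N)%nat -> forall y, 0 <= y ->
  C n (x n) + a n * (y - x n) <= C n y.

Lemma welfare_linearised_at :
  welfare N p C x = welfare N p (linear_costs a) x + cost_gap N C a x.
Proof. unfold welfare, cost_gap, linear_costs. rewrite sumN_minus. ring. Qed.

Lemma welfare_linearised_le y :
  nonneg_vec N y -> welfare N p C y <= welfare N p (linear_costs a) y + cost_gap N C a x.
Proof.
  intros Hy. unfold welfare, cost_gap, linear_costs. rewrite sumN_minus.
  assert (sumN N (fun n => a n * y n - (a n * x n - C n (x n)))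
          <= sumN N (fun n => C n (y n))).
  { apply sumN_le. intros n Hn. pose proof (support n Hn (y n) (Hy n Hn)). lra. }
  rewrite sumN_minus, sumN_minus in *. lra.
Qed.

Lemma linearised_social_opt :
  social_opt N p (linear_costs a) x -> social_opt N p C x.
Proof.
  intros [Hx Hopt]. split; auto. intros y Hy.
  rewrite welfare_linearised_at.
  pose proof (welfare_linearised_le y Hy). pose proof (Hopt y Hy). lra.
Qed.

Lemma cost_gap_nonneg :
  nonneg_vec N x -> (forall n, (n < N)%nat -> C n 0 = 0) -> 0 <= cost_gap N C a x.
Proof.
  intros Hx HC0. apply sumN_nonneg. intros n Hn.
  pose proof (support n Hn 0 (Rle_refl 0)). rewrite HC0 in *; auto. lra.
Qed.

End Linearisation.

Section Candidate.
Variables (N : nat) (p dpp dpm : R -> R) (dC : nat -> R -> R) (x : nat -> R).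
Hypothesis p_cont : continuous_nonneg p.
Hypothesis p_noninc : nonincreasing_nonneg p.
Hypothesis p_left : forall q, 0 < q -> left_deriv p q (dpm q).
Hypothesis candidate : cournot_candidate N p dpp dpm dC x.

Local Notation X := (total N x).
Local Notation alpha := (fun n => dC n (x n)).

Lemma total_nonneg : 0 <= X.
Proof. apply sumN_nonneg, (proj1 candidate). Qed.

Lemma candidate_active_slope n : (n < N)%nat -> 0 < x n -> dC n (x n) <= p X.
Proof.
  intros Hn Hxn. pose proof (proj1 (proj2 candidate n Hn) Hxn).
  assert (HX : 0 < X).
  { pose proof (sumN_ge_term N x (proj1 candidate) n Hn). unfold total. lra. }
  pose proof (nonincreasing_left_deriv_nonpos p X _ p_noninc HX (p_left X HX)).
  assert (x n * dpm X <= 0) by nra. lra.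
Qed.

Lemma candidate_idle_slope n : (n < N)%nat -> x n = 0 -> p X <= dC n (x n).
Proof.
  intros Hn Hxn. pose proof (proj2 (proj2 candidate n Hn)) as H.
  rewrite Hxn, Rmult_0_l, Rplus_0_r in H. now rewrite Hxn.
Qed.

Lemma candidate_markup_nonneg n : (n < N)%nat -> 0 <= (p X - dC n (x n)) * x n.
Proof.
  intros Hn. pose proof (proj1 candidate n Hn).
  destruct (Req_dec (x n) 0) as [->|Hxn]; [lra|].
  pose proof (candidate_active_slope n Hn ltac:(lra)). nra.
Qed.

Lemma candidate_markup_sum :
  sumN N (fun n => (p X - dC n (x n)) * x n)
  = p X * X - sumN N (fun n => dC n (x n) * x n).
Proof.
  rewrite (sumN_ext N _ (fun n => p X * x n - dC n (x n) * x n)) by (intros; ring).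
  rewrite sumN_minus, sumN_scal. reflexivity.
Qed.

(* sum alpha_n x_n <= P X <= int_0^X p: the linearised welfare is >= 0. *)
Lemma candidate_linear_welfare_nonneg : 0 <= welfare N p (linear_costs alpha) x.
Proof.
  unfold welfare, linear_costs.
  pose proof (sumN_nonneg _ _ candidate_markup_nonneg). rewrite candidate_markup_sum in *.
  pose proof (proj1 (Rint_demand_bounds p p_cont p_noninc X total_nonneg)). lra.
Qed.

Lemma candidate_zero_welfare_slopes :
  welfare N p (linear_costs alpha) x <= 0 -> forall n, (n < N)%nat -> p 0 <= dC n (x n).
Proof.
  unfold welfare, linear_costs. intros Hw.
  pose proof (sumN_nonneg _ _ candidate_markup_nonneg) as Hmarkup.
  rewrite candidate_markup_sum in Hmarkup.
  pose proof (proj1 (Rint_demand_bounds p p_cont p_noninc X total_nonneg)).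
  assert (Hflat : p 0 = p X).
  { destruct (Rle_lt_or_eq_dec 0 X total_nonneg) as [HX|HX];
      [apply (Rint_demand_flat p p_cont p_noninc); lra | now rewrite <- HX]. }
  assert (Hzero : forall n, (n < N)%nat -> (p X - dC n (x n)) * x n = 0).
  { apply sumN_nonneg_zero; [exact candidate_markup_nonneg|].
    rewrite candidate_markup_sum. lra. }
  intros n Hn. rewrite Hflat.
  destruct (Req_dec (x n) 0) as [Hxn|Hxn]; [apply candidate_idle_slope; auto|].
  destruct (Rmult_integral _ _ (Hzero n Hn)); lra.
Qed.

Lemma nonoptimal_candidate_welfare_pos (C : nat -> R -> R) :
  (forall n, (n < N)%nat -> forall y, 0 <= y ->
     C n (x n) + dC n (x n) * (y - x n) <= C n y) ->
  ~ social_opt N p C x -> 0 < welfare N p (linear_costs alpha) x.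
Proof.
  intros Hsupport Hnopt. destruct (Rlt_or_le 0 (welfare N p (linear_costs alpha) x))
    as [|Hw]; auto. exfalso. apply Hnopt.
  apply (linearised_social_opt N p C alpha x Hsupport).
  split; [exact (proj1 candidate)|]. intros y Hy.
  pose proof (linear_welfare_nonpos p p_cont p_noninc N alpha y
    (candidate_zero_welfare_slopes Hw) Hy).
  pose proof candidate_linear_welfare_nonneg. lra.
Qed.

End Candidate.

(* a/b <= (a+d)/(b+d) <= (a+d)/c: adding the gap d can only raise efficiency. *)
Lemma efficiency_ratio_le a b c d :
  0 < a -> a <= b -> 0 <= d -> a + d <= c -> c <= b + d -> a / b <= (a + d) / c.
Proof.
  intros Ha Hab Hd Hac Hcb. apply Rmult_le_reg_r with (b * c); [nra|].
  replace (a / b * (b * c)) with (a * c) by (field; lra).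
  replace ((a + d) / c * (b * c)) with ((a + d) * b) by (field; lra).
  nra.
Qed.

Theorem proposition6 (N : nat) (p dpp dpm : R -> R) (C dC : nat -> R -> R)
  (x : nat -> R) :
  Assumption1 N C dC -> Assumption2 p dpp dpm ->
  Assumption3 N p dC -> Assumption4 N p dC ->
  convex_nonneg p ->
  cournot_candidate N p dpp dpm dC x ->
  ~ social_opt N p C x ->
  let alpha := fun n => dC n (x n) in
  let Cb := fun n y => alpha n * y in
  let dCb := fun n (_ : R) => alpha n in
  Assumption1 N Cb dCb /\ Assumption2 p dpp dpm /\
  Assumption3 N p dCb /\ Assumption4 N p dCb /\
  cournot_candidate N p dpp dpm dCb x /\
  (forall xS xSb, social_opt N p C xS -> social_opt N p Cb xSb ->
     0 < welfare N p Cb x / welfare N p Cb xSb <=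
         welfare N p C x / welfare N p C xS).
Proof.
  intros HC Hp [Rb [HRb HpRb]] _ _ Hcand Hnopt alpha Cb dCb.
  pose proof Hp as [Hpc [Hpnn [Hpni [_ [_ Hpl]]]]].
  pose proof (proj1 Hcand) as Hx.
  assert (Hsupport : forall n, (n < N)%nat -> forall y, 0 <= y ->
            C n (x n) + alpha n * (y - x n) <= C n y).
  { intros n Hn y Hy. destruct (HC n Hn) as [Hcv [_ [_ [_ [_ [Hr [Hd _]]]]]]].
    apply convex_cost_support; auto. }
  assert (HC0 : forall n, (n < N)%nat -> C n 0 = 0)
    by (intros n Hn; destruct (HC n Hn) as [_ [_ [_ [HC0 _]]]]; exact HC0).
  (* C_n'(0) <= alpha_n gives Assumption 3 for the linear costs *)
  assert (Hslope : forall n, (n < N)%nat -> p Rb <= alpha n).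
  { intros n Hn. destruct (HC n Hn) as [Hcv [_ [_ [_ [_ [Hr [Hd _]]]]]]].
    pose proof (HpRb n Hn). pose proof (convex_cost_slope_at_zero_le _ _ (x n) Hcv Hr Hd (Hx n Hn)).
    unfold alpha. lra. }
  assert (Hpos : 0 < welfare N p (linear_costs alpha) x)
    by exact (nonoptimal_candidate_welfare_pos N p dpp dpm dC x Hpc Hpni Hpl Hcand C
                Hsupport Hnopt).
  split; [|split; [exact Hp|split; [|split; [|split; [exact Hcand|]]]]].
  - apply (linear_costs_assumption1 N alpha). intros n Hn. pose proof (Hpnn Rb ltac:(lra)).
    pose proof (Hslope n Hn). lra.
  - exists Rb. split; [exact HRb|exact Hslope].
  - exact (linear_costs_assumption4 p Hpc Hpni N alpha x Hx Hpos).
  - (* efficiency: a = Wl(x), b = Wl(xSb), c = W(xS), d = the cost gap *)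
    intros xS xSb [HxS HoptS] [HxSb HoptSb].
    change Cb with (linear_costs alpha) in HoptSb |- *.
    pose proof (cost_gap_nonneg N C alpha x Hsupport Hx HC0).
    pose proof (welfare_linearised_at N p C alpha x) as Hat.
    pose proof (welfare_linearised_le N p C alpha x Hsupport xS HxS).
    pose proof (HoptSb x Hx). pose proof (HoptSb xS HxS). pose proof (HoptS x Hx).
    split; [apply Rdiv_lt_0_compat; lra|].
    rewrite Hat. apply efficiency_ratio_le; lra.
Qed.
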